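(* The following linear maps $\mathcal{W}\to\mathcal{F}_\alpha\otimes\mathcal{F}_\beta$ (for the indicated $(\alpha,\beta)$) are 1-cocycles that are not 1-coboundaries: $\mathrm{d}^1_{0,1}(L_n)=n^2v_0\otimes v_n$ into $\mathcal{F}_0\otimes\mathcal{F}_1$; $\mathrm{d}^1_{1,0}(L_n)=n^2v_n\otimes v_0$ into $\mathcal{F}_1\otimes\mathcal{F}_0$; $\mathrm{d}_{0,2}(L_n)=n^3v_0\otimes v_n$ into $\mathcal{F}_0\otimes\mathcal{F}_2$; $\mathrm{d}_{2,0}(L_n)=n^3v_n\otimes v_0$ into $\mathcal{F}_2\otimes\mathcal{F}_0$; and $\mathrm{d}_{1,1}$ into $\mathcal{F}_1\otimes\mathcal{F}_1$ with $\mathrm{d}_{1,1}(L_n)=\sum_{i=1}^{n}i(n-i)v_i\otimes v_{n-i}$ for $n\ge1$, $\mathrm{d}_{1,1}(L_0)=0$, $\mathrm{d}_{1,1}(L_n)=-\sum_{i=n}^{-1}i(n-i)v_i\otimes v_{n-i}$ for $n\le-1$. Moreover, $\mathrm{d}^1_{0,1}$ and $\mathrm{d}_{0,1}$ are linearly independent, and $\mathrm{d}^1_{1,0}$ and $\mathrm{d}_{1,0}$ are linearly independent, where $\mathrm{d}_{0,1}(L_n)$ and $\mathrm{d}_{1,0}(L_n)$ are given by $\sum_{i=0}^{n-1}(i-n\beta)v_i\otimes v_{n-i}$ for $n\ge1$, $0$ for $n=0$, $-\sum_{i=n}^{-1}(i-n\beta)v_i\otimes v_{n-i}$ for $n\le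 -1$, with $\beta=1$, resp. $\beta=0$.
   Context: The Witt algebra $\mathcal{W}$ has basis $\{L_n\mid n\in\mathbb{Z}\}$ and bracket $[L_m,L_n]=(m-n)L_{m+n}$. $\mathcal{F}_\alpha$ has basis $\{v_n\}$ with $L_m\cdot v_n=-(\alpha m+n)v_{m+n}$; $\mathcal{F}_\alpha\otimes\mathcal{F}_\beta$ is a $\mathcal{W}$-module via $L_m\cdot(v_i\otimes v_j)=-(i+\alpha m)v_{m+i}\otimes v_j-(j+\beta m)v_i\otimes v_{m+j}$. A 1-cocycle is a linear map $d$ with $d([x,y])=x\cdot d(y)-y\cdot d(x)$; a 1-coboundary is a map $x\mapsto x\cdot v$ for a fixed $v$ in the module. *)

From HB Require Import structures.
From mathcomp Require Import all_boot all_order all_algebra.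
Set Implicit Arguments. Unset Strict Implicit. Unset Printing Implicit Defensive.
Import Order.TTheory GRing.Theory Num.Theory.
Local Open Scope ring_scope.

Section WittModule.
Variable K : fieldType.

(* Elements of F_alpha (x) F_beta are represented by their coefficient
   functions: f i j is the coefficient of v_i (x) v_j.  Genuine elements of
   the tensor product are the finitely supported such functions. *)
Definition tens := int -> int -> K.

Definition finsupp (f : tens) : Prop :=
  exists N : nat, forall i j : int,
    ((N%:Z < `|i|) || (N%:Z < `|j|))%R -> f i j = 0.

Definition tzero : tens := fun _ _ => 0.
Definition tscale (c : K) (f : tens) : tens := fun i j => c * f i j.
Definition tadd (f g : tens) : tens := fun i j => f i j + g i j.

Definition tb (a b : int) : tens :=
  fun i j => if (i == a) && (j == b) then 1 else 0.

(* \sum_{i = a}^{b} F i  (empty if b < a) *)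
Definition tsumZ (a b : int) (F : int -> tens) : tens :=
  fun i j => \sum_(k < absz (b - a + 1)%R | (a <= b)%R) F (a + k%:Z) i j.

(* Action of L_m on F_alpha (x) F_beta:
   L_m.(v_a (x) v_b) = -(a + alpha m) v_{m+a} (x) v_b - (b + beta m) v_a (x) v_{m+b},
   written on coefficients. *)
Definition act (alpha beta : K) (m : int) (f : tens) : tens :=
  fun i j => - ((i - m)%:~R + alpha * m%:~R) * f (i - m) j
             - ((j - m)%:~R + beta * m%:~R) * f i (j - m).

(* A linear map d : W -> F_alpha (x) F_beta is determined by its values
   d n := d(L_n) on the basis {L_n}.  Since the cocycle identity is bilinear,
   it holds for all x, y in W iff it holds on basis elements, where
   [L_m, L_n] = (m - n) L_{m+n}. *)
Definition cocycle (alpha beta : K) (d : int -> tens) : Prop :=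
  (forall n, finsupp (d n)) /\
  forall m n : int,
    tscale (m - n)%:~R (d (m + n))
    = tadd (act alpha beta m (d n)) (tscale (-1) (act alpha beta n (d m))).

Definition coboundary (alpha beta : K) (d : int -> tens) : Prop :=
  exists v : tens, finsupp v /\ forall n, d n = act alpha beta n v.

Definition indep_classes (alpha beta : K) (d1 d2 : int -> tens) : Prop :=
  forall a b : K,
    coboundary alpha beta (fun n => tadd (tscale a (d1 n)) (tscale b (d2 n))) ->
    a = 0 /\ b = 0.

Definition d1_01 (n : int) : tens := tscale (n%:~R ^+ 2) (tb 0 n).
Definition d1_10 (n : int) : tens := tscale (n%:~R ^+ 2) (tb n 0).
Definition d_02 (n : int) : tens := tscale (n%:~R ^+ 3) (tb 0 n).
Definition d_20 (n : int) : tens := tscale (n%:~R ^+ 3) (tb n 0).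

Definition d_11 (n : int) : tens :=
  let F := fun i : int => tscale (i * (n - i))%:~R (tb i (n - i)) in
  if (0 < n)%R then tsumZ 1 n F
  else if n == 0 then tzero
  else tscale (-1) (tsumZ n (-1) F).

(* d_{0,1} (beta = 1) and d_{1,0} (beta = 0) *)
Definition d_beta (beta : K) (n : int) : tens :=
  let F := fun i : int => tscale (i%:~R - n%:~R * beta) (tb i (n - i)) in
  if (0 < n)%R then tsumZ 0 (n - 1) F
  else if n == 0 then tzero
  else tscale (-1) (tsumZ n (-1) F).

End WittModule.

(* For
   [d_11] the weight [j |i| + i |j|] encodes its three cases in one formula,
   which makes the identity polynomial.
   Non-triviality comes from the finite support of [v] in a coboundary
   [n |-> L_n . v]: for large [n] the coefficient of [v_0 (x) v_n] in
   [L_n . v] is [- beta n v(0,0)], linear in [n], and the coefficient of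
   [v_k (x) v_k] in [L_(2k) . v] vanishes.  In characteristic 0 the second
   differences of [n^2] and [n^3] do not vanish, which rules out [d^1_{0,1}]
   and [d_{0,2}]; the diagonal coefficient [k^2] rules out [d_11].  The same
   two coefficients separate [d^1_{0,1}] from [d_{0,1}].  The cases with the
   two factors exchanged follow from the flip
   [F_beta (x) F_alpha ~ F_alpha (x) F_beta]. *)

From HB Require Import structures.
From mathcomp Require Import all_boot all_order all_algebra.
From mathcomp Require Import zify ring.
From Stdlib Require Import FunctionalExtensionality.
Import GRing.Theory Num.Theory.
Local Open Scope ring_scope.

Section WittCocycles.
Variable K : fieldType.
Implicit Types (alpha beta a b c s : K) (f g : tens K) (d e : int -> tens K).

Lemma tsumZ_antidiagE (lo hi n : int) (p : int -> K) (i j : int) :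
  tsumZ lo hi (fun x => tscale (p x) (@tb K x (n - x))) i j =
  if (lo <= i <= hi) && (j == n - i) then p i else 0.
Proof.
rewrite /tsumZ /tscale /tb.
case: (lerP lo hi) => hlo; last first.
  rewrite big_pred0_eq; case: ifP => // /andP[/andP[h1 h2] _]; lia.
case i_range: (lo <= i <= hi); last first.
  rewrite /= big1 // => k _.
  have /negbTE -> : i != lo + k%:Z by apply/eqP => e; have := ltn_ord k; lia.
  by rewrite mulr0.
have hk : (absz (i - lo) < absz (hi - lo + 1)%R)%N by lia.
rewrite (bigD1 (Ordinal hk)) //= big1 ?addr0.
  have -> : lo + (absz (i - lo))%:Z = i by lia.
  by rewrite eqxx /=; case: (j == n - i); rewrite ?mulr1 ?mulr0.
move=> k hk'.
have /negbTE -> : i != lo + k%:Z.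
  by apply/eqP => e; move/eqP: hk'; apply; apply/val_inj => /=; lia.
by rewrite mulr0.
Qed.

Lemma tscale_tbE c (x y i j : int) :
  tscale c (@tb K x y) i j = if (i == x) && (j == y) then c else 0.
Proof. by rewrite /tscale /tb; case: ifP; rewrite ?mulr1 ?mulr0. Qed.

Lemma finsupp_tscale_tb c (x y : int) : finsupp (tscale c (@tb K x y)).
Proof.
exists (maxn (absz x) (absz y)) => i j hij; rewrite tscale_tbE.
by case: ifP => // /andP[/eqP ei /eqP ej]; lia.
Qed.

Definition tswap f : tens K := fun i j => f j i.

Lemma tswap_tscale_tb c (x y : int) :
  tswap (tscale c (@tb K x y)) = tscale c (@tb K y x).
Proof.
apply: functional_extensionality => i; apply: functional_extensionality => j.
by rewrite /tswap !tscale_tbE andbC.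
Qed.

Lemma finsupp_tswap f : finsupp f -> finsupp (tswap f).
Proof. by move=> [N fN]; exists N => i j hij; apply: fN; rewrite orbC. Qed.

Lemma act_tswap alpha beta (m : int) f :
  act alpha beta m (tswap f) = tswap (act beta alpha m f).
Proof.
apply: functional_extensionality => i; apply: functional_extensionality => j.
by rewrite /act /tswap addrC !mulNr.
Qed.

Lemma tswap_tscale c f : tswap (tscale c f) = tscale c (tswap f).
Proof. by []. Qed.

Lemma tswap_tadd f g : tswap (tadd f g) = tadd (tswap f) (tswap g).
Proof. by []. Qed.

Lemma cocycle_tswap {alpha beta d} :
  cocycle beta alpha d -> cocycle alpha beta (tswap \o d).
Proof.
move=> [dfin dcoc]; split=> [n|m n].
  exact: finsupp_tswap (dfin n).
by rewrite /comp 2!act_tswap -2!tswap_tscale -tswap_tadd -dcoc.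
Qed.

Lemma coboundary_tswap {alpha beta d} :
  coboundary beta alpha d -> coboundary alpha beta (tswap \o d).
Proof.
move=> [v [vfin dv]]; exists (tswap v); split; first exact: finsupp_tswap.
by move=> n; rewrite act_tswap /= dv.
Qed.

Lemma indep_classes_tswap alpha beta d e :
  indep_classes beta alpha d e -> indep_classes alpha beta (tswap \o d) (tswap \o e).
Proof. by move=> de a b cob; apply: de; exact: (coboundary_tswap cob). Qed.

Lemma d1_10_tswap : @d1_10 K = tswap \o @d1_01 K.
Proof. by apply: functional_extensionality => n; rewrite /= tswap_tscale_tb. Qed.

Lemma d_20_tswap : @d_20 K = tswap \o @d_02 K.
Proof. by apply: functional_extensionality => n; rewrite /= tswap_tscale_tb. Qed.

(** [v_0] spans a trivial submodule of [F_0], so [L_m] only moves the second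
    factor. *)
Lemma act_tb0 beta (m n : int) c :
  act 0 beta m (tscale c (@tb K 0 n))
  = tscale (- (n%:~R + beta * m%:~R) * c) (@tb K 0 (m + n)).
Proof.
apply: functional_extensionality => i; apply: functional_extensionality => j.
rewrite /act !tscale_tbE mul0r addr0 mulNr.
have -> : ((i - m)%:~R : K) * (if (i - m == 0) && (j == n) then c else 0) = 0.
  by case: (eqVneq (i - m) 0) => [->|]; rewrite ?mul0r ?mulr0.
have -> : (j - m == n) = (j == m + n) by apply/eqP/eqP; lia.
case: (eqVneq j (m + n)) => [->|_]; last by rewrite !andbF; ring.
rewrite !andbT; case: (i == 0); last by ring.
have -> : m + n - m = n by ring.
ring.
Qed.

Lemma cocycle_tb0 beta (p : int -> K) :
  (forall m n : int, (m - n)%:~R * p (m + n)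
     = (m%:~R + beta * n%:~R) * p m - (n%:~R + beta * m%:~R) * p n) ->
  cocycle 0 beta (fun n => tscale (p n) (@tb K 0 n)).
Proof.
move=> p_coc; split=> [n|m n]; first exact: finsupp_tscale_tb.
rewrite !act_tb0 [n + m]addrC.
apply: functional_extensionality => i; apply: functional_extensionality => j.
rewrite /tadd /tscale /tb; case: ifP => _; last by ring.
rewrite !mulr1 p_coc; ring.
Qed.

Definition eventually_linear (h : int -> K) : Prop :=
  exists c (N : nat), forall n : nat, (N <= n)%N -> h n = n%:~R * c.

Lemma eventually_linearB b {g h : int -> K} :
  eventually_linear g -> eventually_linear h ->
  eventually_linear (fun n => g n - b * h n).
Proof.
move=> [cg [Ng gl]] [ch [Nh hl]]; exists (cg - b * ch), (maxn Ng Nh) => n.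
rewrite geq_max => /andP[hg hh]; rewrite gl // hl //; ring.
Qed.

Lemma eventually_linear_diff2 (h : int -> K) :
  eventually_linear h -> exists n : nat, h n - 2 * h n.+1 + h n.+2 = 0.
Proof.
move=> [c [N hl]]; exists N; rewrite !hl //; [ring | exact: leqW].
Qed.

Lemma coboundary_coef0n_linear {alpha beta d} :
  coboundary alpha beta d -> eventually_linear (fun n => d n 0 n).
Proof.
move=> [v [[N vN] dv]]; exists (- (beta * v 0 0)), N.+1 => n hn.
rewrite dv /act subrr (vN (0 - n%:Z)); last by apply/orP; left; lia.
ring.
Qed.

Lemma coboundary_coefkk_eventually0 {alpha beta d} :
  coboundary alpha beta d -> exists N : nat, forall k : nat, (N < k)%N -> d (k + k) k k = 0.
Proof.
move=> [v [[N vN] dv]]; exists N => k hk; rewrite dv /act.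
rewrite (vN (k%:Z - (k%:Z + k%:Z))) ?(vN k (k%:Z - (k%:Z + k%:Z))); first by ring.
- by apply/orP; right; lia.
- by apply/orP; left; lia.
Qed.

Lemma cocycle_d1_01 : cocycle 0 1 (@d1_01 K).
Proof. by apply: cocycle_tb0 => m n; ring. Qed.

Lemma cocycle_d1_10 : cocycle 1 0 (@d1_10 K).
Proof. by rewrite d1_10_tswap; exact: cocycle_tswap cocycle_d1_01. Qed.

Lemma cocycle_d_02 : cocycle 0 (1 + 1) (@d_02 K).
Proof. by apply: cocycle_tb0 => m n; ring. Qed.

Lemma cocycle_d_20 : cocycle (1 + 1) 0 (@d_20 K).
Proof. by rewrite d_20_tswap; exact: cocycle_tswap cocycle_d_02. Qed.

Section CharacteristicZero.
Hypothesis char0 : has_pchar0 K.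

Lemma char0_natr_neq0 {n : nat} : (0 < n)%N -> n%:R != 0 :> K.
Proof. by rewrite ((pcharf0P K).1 char0) -lt0n. Qed.

Lemma two_neq0 : (2 : K) != 0.
Proof. exact: char0_natr_neq0. Qed.

Lemma half_intr_double (x : int) : (2 * x)%:~R / 2 = x%:~R :> K.
Proof. by rewrite intrM mulrAC divff ?mul1r // two_neq0. Qed.

Lemma eventually_linear_square {h : int -> K} a :
  eventually_linear h -> (forall n : nat, h n = a * n%:~R ^+ 2) -> a = 0.
Proof.
move=> /eventually_linear_diff2 [n diff2_0] hE.
have : 2 * a = 0 by rewrite -{}diff2_0 !hE; ring.
by move/eqP; rewrite mulf_eq0 (negbTE two_neq0) => /eqP.
Qed.

Lemma eventually_linear_cube (h : int -> K) :
  eventually_linear h -> ~ (forall n : nat, h n = n%:~R ^+ 3).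
Proof.
move=> /eventually_linear_diff2 [n diff2_0] hE.
have : (6 * n.+1)%:R = 0 :> K by rewrite -{}diff2_0 !hE; ring.
by apply/eqP; exact: char0_natr_neq0.
Qed.

Lemma d1_01_not_coboundary : ~ coboundary 0 1 (@d1_01 K).
Proof.
move=> /coboundary_coef0n_linear lin.
suff /eqP : (1 : K) = 0 by rewrite oner_eq0.
by apply: (eventually_linear_square 1 lin) => n; rewrite /d1_01 tscale_tbE !eqxx mul1r.
Qed.

Lemma d1_10_not_coboundary : ~ coboundary 1 0 (@d1_10 K).
Proof. by rewrite d1_10_tswap => /coboundary_tswap; exact: d1_01_not_coboundary. Qed.

Lemma d_02_not_coboundary : ~ coboundary 0 (1 + 1) (@d_02 K).
Proof.
move=> /coboundary_coef0n_linear /eventually_linear_cube; apply=> n.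
by rewrite /d_02 tscale_tbE !eqxx.
Qed.

Lemma d_20_not_coboundary : ~ coboundary (1 + 1) 0 (@d_20 K).
Proof. by rewrite d_20_tswap => /coboundary_tswap; exact: d_02_not_coboundary. Qed.

(** [j |i| + i |j| = i j (sgn i + sgn j)]: half of it is [i j] when [i, j > 0],
    [- i j] when [i, j < 0] and [0] otherwise. *)
Definition d11_weight (i j : int) : int := j * `|i| + i * `|j|.

Lemma d_11E (n i j : int) :
  @d_11 K n i j = if i + j == n then (d11_weight i j)%:~R / 2 else 0.
Proof.
have ji : (j == n - i) = (i + j == n) by apply/eqP/eqP; lia.
rewrite /d_11 /d11_weight; case: (ltrP 0 n) => n_sign.
  rewrite tsumZ_antidiagE ji; case: (eqVneq (i + j) n) => ijn; rewrite ?andbF //.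
  case: ifP => range.
    have -> : j * `|i| + i * `|j| = 2 * (i * (n - i)) by nia.
    by rewrite half_intr_double.
  have -> : j * `|i| + i * `|j| = 0 by nia.
  by rewrite mul0r.
case: eqP => [n0|_].
  case: (eqVneq (i + j) n) => // ijn.
  have -> : j * `|i| + i * `|j| = 0 by nia.
  by rewrite mul0r.
rewrite /tscale tsumZ_antidiagE ji; case: (eqVneq (i + j) n) => ijn.
  case: ifP => range /=.
    have -> : j * `|i| + i * `|j| = 2 * - (i * (n - i)) by nia.
    by rewrite half_intr_double intrN mulN1r.
  have -> : j * `|i| + i * `|j| = 0 by nia.
  by rewrite mul0r mulr0.
by rewrite andbF mulr0.
Qed.

Lemma cocycle_d_11 : cocycle 1 1 (@d_11 K).
Proof.
split=> [n|m n].
  exists (absz n) => i j hij; rewrite d_11E /d11_weight.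
  case: eqP => // ijn; have -> : j * `|i| + i * `|j| = 0 by nia.
  by rewrite mul0r.
apply: functional_extensionality => i; apply: functional_extensionality => j.
rewrite /tscale /tadd /act !d_11E.
have -> : (i - m + j == n) = (i + j == m + n) by apply/eqP/eqP; lia.
have -> : (i + (j - m) == n) = (i + j == m + n) by apply/eqP/eqP; lia.
have -> : (i - n + j == m) = (i + j == m + n) by apply/eqP/eqP; lia.
have -> : (i + (j - n) == m) = (i + j == m + n) by apply/eqP/eqP; lia.
case: eqP => ijmn; last by ring.
rewrite /d11_weight.
have -> : `|j - m| = `|i - n| by rewrite -normrN; congr `|_|; lia.
have -> : `|j - n| = `|i - m| by rewrite -normrN; congr `|_|; lia.
ring.
Qed.

Lemma d_11_not_coboundary : ~ coboundary 1 1 (@d_11 K).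
Proof.
move=> /coboundary_coefkk_eventually0 [N diag0]; have := diag0 N.+1 (ltnSn N).
rewrite d_11E eqxx.
have -> : d11_weight N.+1 N.+1 = 2 * (N.+1 * N.+1)%N%:Z by rewrite /d11_weight; lia.
by rewrite half_intr_double => /eqP; apply/negP; exact: char0_natr_neq0.
Qed.

Lemma d_betaE beta (n i j : int) : 0 < n ->
  d_beta beta n i j
  = if (0 <= i <= n - 1) && (j == n - i) then i%:~R - n%:~R * beta else 0.
Proof. by move=> n_pos; rewrite /d_beta n_pos tsumZ_antidiagE. Qed.

Lemma indep_classes_d1_01 alpha beta e s : s != 0 ->
  eventually_linear (fun n => e n 0 n) ->
  (forall k : nat, (0 < k)%N -> e (k + k) k k = k%:~R * s) ->
  indep_classes alpha beta (@d1_01 K) e.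
Proof.
move=> s_neq0 e_lin e_diag a b cob.
have a0 : a = 0.
  apply: (eventually_linear_square a (eventually_linearB b (coboundary_coef0n_linear cob) e_lin)).
  by move=> n; rewrite /= /tadd /tscale /d1_01 /tscale /tb !eqxx /=; ring.
split=> //; have [N diag0] := coboundary_coefkk_eventually0 cob.
have := diag0 N.+1 (ltnSn N).
rewrite /tadd /tscale a0 mul0r add0r e_diag // => /eqP.
rewrite !mulf_eq0 (negbTE s_neq0) (negbTE (char0_natr_neq0 (ltn0Sn N))) !orbF.
by move/eqP.
Qed.

Lemma indep_classes_d1_01_d_beta1 : indep_classes 0 1 (@d1_01 K) (d_beta 1).
Proof.
apply: (@indep_classes_d1_01 _ _ _ (-1)); first by rewrite oppr_eq0 oner_eq0.
  exists (-1), 1%N => n n_pos; rewrite d_betaE; last by lia.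
  case: ifP => [_|/negP[]]; [ring | lia].
move=> k k_pos; rewrite d_betaE; last by lia.
case: ifP => [_|/negP[]]; [ring | lia].
Qed.

Lemma indep_classes_d1_10_d_beta0 : indep_classes 1 0 (@d1_10 K) (d_beta 0).
Proof.
rewrite d1_10_tswap; apply: (@indep_classes_tswap _ _ _ (tswap \o d_beta 0)).
apply: (@indep_classes_d1_01 _ _ _ 1); first exact: oner_neq0.
  exists 0, 1%N => n n_pos; rewrite /= /tswap d_betaE; last by lia.
  by case: ifP => [/andP[range _]|_]; [lia | rewrite mulr0].
move=> k k_pos; rewrite /= /tswap d_betaE; last by lia.
by case: ifP => [_|/negP[]]; [rewrite mulr0 subr0 mulr1 | lia].
Qed.

End CharacteristicZero.

End WittCocycles.

Theorem propositionP3p1 (K : fieldType) (char0 : [pchar K] =i pred0) :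
  (cocycle 0 1 (@d1_01 K) /\ ~ coboundary 0 1 (@d1_01 K)) /\
  (cocycle 1 0 (@d1_10 K) /\ ~ coboundary 1 0 (@d1_10 K)) /\
  (cocycle 0 (1 + 1) (@d_02 K) /\ ~ coboundary 0 (1 + 1) (@d_02 K)) /\
  (cocycle (1 + 1) 0 (@d_20 K) /\ ~ coboundary (1 + 1) 0 (@d_20 K)) /\
  (cocycle 1 1 (@d_11 K) /\ ~ coboundary 1 1 (@d_11 K)) /\
  indep_classes 0 1 (@d1_01 K) (d_beta 1) /\
  indep_classes 1 0 (@d1_10 K) (d_beta 0).
Proof.
split; first by split; [exact: cocycle_d1_01 | exact: d1_01_not_coboundary].
split; first by split; [exact: cocycle_d1_10 | exact: d1_10_not_coboundary].
split; first by split; [exact: cocycle_d_02 | exact: d_02_not_coboundary].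
split; first by split; [exact: cocycle_d_20 | exact: d_20_not_coboundary].
split; first by split; [exact: cocycle_d_11 | exact: d_11_not_coboundary].
split; [exact: indep_classes_d1_01_d_beta1 | exact: indep_classes_d1_10_d_beta0].
Qed.
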